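(* Let $p,r,\ell\in\mathbb{N}$ with $1<p\leq r+1\leq\ell$, and let $x_1,\dots,x_\ell$ be arbitrary complex numbers. Then \[ \mathfrak{F}\big(\{x_j\}_{j=1}^{r}\big)\,\mathfrak{F}\big(\{x_j\}_{j=p}^{\ell}\big)-\mathfrak{F}\big(\{x_j\}_{j=1}^{\ell}\big)\,\mathfrak{F}\big(\{x_j\}_{j=p}^{r}\big) =\Big(\prod_{j=p-1}^{r}x_jx_{j+1}\Big)\,\mathfrak{F}\big(\{x_j\}_{j=1}^{p-2}\big)\,\mathfrak{F}\big(\{x_j\}_{j=r+2}^{\ell}\big). \] Moreover, if $p,r\in\mathbb{N}$ with $1<p\leq r+1$ and $\{x_j\}_{j=1}^\infty$ is a complex sequence with $\sum_{k=1}^\infty|x_kx_{k+1}|<\infty$, then \[ \mathfrak{F}\big(\{x_j\}_{j=1}^{r}\big)\,\mathfrak{F}\big(\{x_j\}_{j=p}^{\infty}\big)-\mathfrak{F}\big(\{x_j\}_{j=p}^{r}\big)\,\mathfrak{F}\big(\{x_j\}_{j=1}^{\infty}\big) =\Big(\prod_{j=p-1}^{r}x_jx_{j+1}\Big)\,\mathfrak{F}\big(\{x_j\}_{j=1}^{p-2}\big)\,\mathfrak{F}\big(\{x_j\}_{j=r+2}^{\infty}\big). \]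
   Context: For a complex sequence $x=\{x_k\}_{k=N_1}^{N_2}$ with $N_1,N_2\in\mathbb{Z}\cup\{\pm\infty\}$, $N_1\le N_2+1$ (the sequence is empty if $N_1=N_2+1$), satisfying $\sum_{k=N_1}^{N_2-1}|x_kx_{k+1}|<\infty$, define \[ \mathfrak{F}(x)=1+\sum_{m=1}^\infty(-1)^m\sum_{k\in\mathcal{I}(N_1,N_2,m)}x_{k_1}x_{k_1+1}x_{k_2}x_{k_2+1}\cdots x_{k_m}x_{k_m+1}, \] where $\mathcal{I}(N_1,N_2,m)=\{k\in\mathbb{Z}^m:\ k_{j+1}\ge k_j+2\ (1\le j\le m-1),\ N_1\le k_1,\ k_m<N_2\}$. In particular $\mathfrak{F}$ of the empty sequence equals $1$, and for a finite tuple $\mathfrak{F}(x_1,\dots,x_n)$ equals $\mathfrak{F}$ of the sequence $(x_1,\dots,x_n,0,0,\dots)$. Here $\{x_j\}_{j=a}^{b}$ with $b=a-1$ denotes the empty sequence. *)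

From HB Require Import structures.
From mathcomp Require Import all_boot all_order all_algebra.
From mathcomp Require Import complex.
From mathcomp Require Import all_classical all_reals all_analysis.

Set Implicit Arguments.
Unset Strict Implicit.
Unset Printing Implicit Defensive.

Import Order.TTheory GRing.Theory Num.Theory.
Import numFieldNormedType.Exports.

Local Open Scope classical_set_scope.
Local Open Scope ring_scope.

(* Index set I(N1,N2,m): m-tuples k with k_1 >= N1, k_{j+1} >= k_j + 2,
   and k_m < N2.  We encode a tuple as k : {ffun 'I_m -> 'I_N2}, so every
   entry is < N2 (for an increasing tuple this is k_m < N2). *)
Definition adm (N1 m N2 : nat) (k : {ffun 'I_m -> 'I_N2}) : bool :=
  [forall j : 'I_m, (N1 <= k j)%N] &&
  [forall i : 'I_m, forall j : 'I_m, (i.+1 == j :> nat) ==> (k i + 2 <= k j)%N].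

Section Frak.
Variable R : realType.
(* R[i] viewed through its numClosedFieldType structure, so that the
   MathComp-Analysis topology/limits of a numFieldType apply to it. *)
Local Notation C := (R[i] : numClosedFieldType).

Definition innerFin (x : nat -> C) (N1 N2 m : nat) : C :=
  \sum_(k : {ffun 'I_m -> 'I_N2} | adm N1 k)
     \prod_(j < m) (x (k j) * x (k j).+1).

Definition FrakFin (x : nat -> C) (N1 N2 : nat) : C :=
  1 + limn (fun n => \sum_(1 <= m < n) (-1) ^+ m * innerFin x N1 N2 m).

(* sum over the infinite index set I(N1,oo,m), taken as the limit over the
   exhausting finite sets I(N1,N,m), N -> oo *)
Definition innerInf (x : nat -> C) (N1 m : nat) : C :=
  limn (fun N => innerFin x N1 N m).

Definition FrakInf (x : nat -> C) (N1 : nat) : C :=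
  1 + limn (fun n => \sum_(1 <= m < n) (-1) ^+ m * innerInf x N1 m).

Definition adjAbsSummable (x : nat -> C) : Prop :=
  cvg ((fun n => \sum_(1 <= k < n) `|x k * x k.+1|) @ \oo).

End Frak.

From HB Require Import structures.
From mathcomp Require Import all_boot all_order all_algebra.
From mathcomp Require Import complex.
From mathcomp Require Import all_classical all_reals all_analysis.
From mathcomp Require Import zify ring lra.
Import Order.TTheory GRing.Theory Num.Theory.
Import numFieldNormedType.Exports.
Local Open Scope classical_set_scope.
Local Open Scope ring_scope.

(* Expanding F along its first index gives the three-term recurrence
     F(x_a..x_N) = F(x_(a+1)..x_N) - x_a x_(a+1) F(x_(a+2)..x_N).
   Replace the first index 1 of the identity by a variable a < p.  For a = p - 1 the
   identity says that the Casoratian of the two solutions a |-> F(x_a..x_r) and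
   a |-> F(x_a..x_l) of the recurrence picks up a factor x_q x_(q+1) at each step; since
   both sides of the identity solve the recurrence in a, it propagates down to a = 1.
   The infinite version is the limit l -> oo: the gap sums defining F(x_a..x_N) are
   bounded by S^m / m!, where S = sum |x_k x_(k+1)|, so by Tannery's theorem
   F(x_a..x_N) -> F(x_a..x_oo). *)

Set Implicit Arguments.
Unset Strict Implicit.
Unset Printing Implicit Defensive.

Section ThreeTermRecurrence.
Variables (K : comNzRingType) (c : nat -> K).

Lemma eq_rec2 (g h : nat -> K) n :
  (forall a, (a < n)%N -> g a = g a.+1 - c a * g a.+2) ->
  (forall a, (a < n)%N -> h a = h a.+1 - c a * h a.+2) ->
  g n = h n -> g n.+1 = h n.+1 -> forall a, (a <= n.+1)%N -> g a = h a.
Proof.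
move=> recg rech ghn ghn1.
suff gh d : (d <= n)%N -> g (n - d)%N = h (n - d)%N /\ g (n - d).+1 = h (n - d).+1.
  move=> a; rewrite leq_eqVlt => /predU1P [-> //|]; rewrite ltnS => an.
  by have [] := gh (n - a)%N (leq_subr _ _); rewrite subKn.
elim: d => [_|d IH dn]; first by rewrite subn0.
have [ghd ghd1] := IH (ltnW dn).
have lt : (n - d.+1 < n)%N by lia.
have e : (n - d.+1).+1 = (n - d)%N by lia.
by rewrite e recg // rech // e ghd ghd1.
Qed.

Variable f : nat -> nat -> K.
Hypothesis f_empty : forall a N, (N <= a)%N -> f a N = 1.
Hypothesis f_rec : forall a N, (a < N)%N -> f a N = f a.+1 N - c a * f a.+2 N.

Lemma casoratian_rec q r l : (q < r)%N -> (r < l)%N ->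
  f q r * f q.+1 l - f q l * f q.+1 r =
  c q * (f q.+1 r * f q.+2 l - f q.+1 l * f q.+2 r).
Proof. by move=> qr rl; rewrite (f_rec qr) (f_rec (ltn_trans qr rl)); ring. Qed.

Lemma casoratian q r l : (q <= r)%N -> (r < l)%N ->
  f q r * f q.+1 l - f q l * f q.+1 r = (\prod_(q <= j < r.+1) c j) * f r.+2 l.
Proof.
move=> qr; have [d ->] : exists d, r = (q + d)%N by exists (r - q)%N; rewrite subnKC.
elim: d q {qr} => [|d IH] q ql.
  rewrite addn0 in ql *; rewrite big_nat1 (f_empty (leqnn q)) (f_empty (leqnSn q)).
  by rewrite (f_rec ql); ring.
rewrite casoratian_rec; [|lia|lia].
rewrite -addSnnS IH; last lia.
by rewrite [in RHS]big_ltn ?mulrA //; lia.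
Qed.

Lemma continuant_identity a p r l :
  (1 < p)%N -> (a < p)%N -> (p <= r.+1)%N -> (r.+1 <= l)%N ->
  f a r * f p l - f a l * f p r =
  (\prod_(p.-1 <= j < r.+1) c j) * f a (p - 2) * f r.+2 l.
Proof.
case: p => [|[|n]] // _ ap pr rl; rewrite subn2 /=.
set P := \prod_(n.+1 <= j < r.+1) c j.
have cas : f n.+1 r * f n.+2 l - f n.+1 l * f n.+2 r = P * f r.+2 l.
  by apply: casoratian; lia.
apply: (@eq_rec2 (fun a => f a r * f n.+2 l - f a l * f n.+2 r)
                 (fun a => P * f a n * f r.+2 l) n) => //=.
- by move=> b bn; rewrite (@f_rec b r) ?(@f_rec b l); [ring|lia|lia].
- by move=> b bn; rewrite (f_rec bn); ring.
- rewrite (@f_rec n r) ?(@f_rec n l) ?(f_empty (leqnn n)); try lia.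
  by rewrite mulr1 -cas; ring.
- by rewrite (f_empty (leqnSn n)) mulr1.
Qed.

End ThreeTermRecurrence.

Section GapSum.
Variable K : comNzRingType.
Implicit Type c : nat -> K.

Fixpoint gap_sum c (a N m : nat) : K :=
  if m is m'.+1 then \sum_(a <= k < N) c k * gap_sum c k.+2 N m' else 1.

Lemma gap_sum_rec c a N m : (a < N)%N ->
  gap_sum c a N m.+1 = c a * gap_sum c a.+2 N m + gap_sum c a.+1 N m.+1.
Proof. by move=> aN; rewrite /= big_ltn. Qed.

Lemma gap_sum_eq0 c a N m : (N <= a + m)%N -> gap_sum c a N m.+1 = 0.
Proof.
elim: m a => [|m IH] a Nam; first by rewrite /= big_geq // -(addn0 a).
rewrite (_ : gap_sum c a N m.+2 = \sum_(a <= k < N) c k * gap_sum c k.+2 N m.+1) //.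
by rewrite big_nat_cond big1 // => k /andP [/andP [ak kN] _]; rewrite IH ?mulr0 //; lia.
Qed.

End GapSum.

Definition gapped m N (g : {ffun 'I_m -> 'I_N}) : bool :=
  [forall i : 'I_m, forall j : 'I_m, (i.+1 == j :> nat) ==> (g i + 2 <= g j)%N].

Lemma admE a m N (g : {ffun 'I_m -> 'I_N}) :
  adm a g = [forall j, (a <= g j)%N] && gapped g.
Proof. by []. Qed.

Lemma gapped_ge_head m N (g : {ffun 'I_m.+1 -> 'I_N}) :
  gapped g -> forall j, (g ord0 <= g j)%N.
Proof.
move=> /forallP gap [j jm]; elim: j jm => [|j IH] jm.
  by rewrite (_ : Ordinal jm = ord0) //; apply: val_inj.
have jm' : (j < m.+1)%N by apply: ltnW.
have /forallP/(_ (Ordinal jm))/implyP := gap (Ordinal jm').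
rewrite /= eqxx => /(_ isT) step.
by apply: leq_trans (IH jm') (leq_trans (leq_addr 2 _) step).
Qed.

Definition ffcons m N (i : 'I_N) (g : {ffun 'I_m -> 'I_N}) : {ffun 'I_m.+1 -> 'I_N} :=
  [ffun j => if unlift ord0 j is Some j' then g j' else i].

Lemma ffcons0 m N i (g : {ffun 'I_m -> 'I_N}) : ffcons i g ord0 = i.
Proof. by rewrite ffunE unlift_none. Qed.

Lemma ffconsS m N i (g : {ffun 'I_m -> 'I_N}) j : ffcons i g (lift ord0 j) = g j.
Proof. by rewrite ffunE liftK. Qed.

Lemma ffcons_bij m N : bijective (fun p : 'I_N * {ffun 'I_m -> 'I_N} => ffcons p.1 p.2).
Proof.
exists (fun g : {ffun 'I_m.+1 -> 'I_N} => (g ord0, [ffun j => g (lift ord0 j)])).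
  by move=> [i g] /=; rewrite ffcons0; congr pair; apply/ffunP => j; rewrite ffunE ffconsS.
move=> g; apply/ffunP => j; rewrite ffunE.
by case: (unliftP ord0 j) => [j'|] ->; rewrite ?liftK ?unlift_none ?ffunE.
Qed.

Lemma adm_ffcons a m N i (g : {ffun 'I_m -> 'I_N}) :
  adm a (ffcons i g) = (a <= i)%N && adm i.+2 g.
Proof.
rewrite !admE; apply/idP/idP.
- case/andP => /forallP ge_a /forallP gap.
  have ai := ge_a ord0; rewrite ffcons0 in ai; rewrite ai /=.
  have gap_g : gapped g.
    apply/forallP => i1; apply/forallP => j1; apply/implyP => e.
    have /forallP/(_ (lift ord0 j1))/implyP := gap (lift ord0 i1).
    by rewrite !ffconsS /= /bump /= !add1n eqSS; apply.
  rewrite gap_g andbT; case: m g gap_g {ge_a} gap => [g _ _|m g gap_g gap].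
    by apply/forallP => -[].
  apply/forallP => j; apply: leq_trans (gapped_ge_head gap_g j).
  have /forallP/(_ (lift ord0 ord0))/implyP := gap ord0.
  by rewrite ffcons0 ffconsS addn2; apply.
- case/andP => ai /andP [/forallP ge_i2 /forallP gap].
  apply/andP; split.
    apply/forallP => j; case: (unliftP ord0 j) => [j'|] ->; rewrite ?ffconsS ?ffcons0 //.
    by have := ge_i2 j'; lia.
  apply/forallP => i1; apply/forallP => j1; apply/implyP.
  case: (unliftP ord0 i1) => [i'|] ->; case: (unliftP ord0 j1) => [j'|] -> //=;
    rewrite /bump /= ?add1n ?eqSS ?ffconsS ?ffcons0.
    by move=> e; have /forallP/(_ j')/implyP := gap i'; apply.
  by rewrite addn2 => _; apply: ge_i2.
Qed.

Section FiniteFrak.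
Variables (R : realType) (x : nat -> R[i]).
Local Notation c := (fun k => x k * x k.+1).

Lemma innerFin_gap_sum a N m : innerFin x a N m = gap_sum c a N m.
Proof.
elim: m a => [|m IH] a.
  rewrite /innerFin (eq_bigl xpredT); last by move=> g; apply/andP; split; apply/forallP => -[].
  rewrite (eq_bigr (fun _ => 1)) => [|g _]; last by rewrite big_ord0.
  by rewrite sumr_const card_ffun !card_ord.
rewrite /innerFin (reindex _ (onW_bij _ (@ffcons_bij m N))) /=.
rewrite (eq_bigl (fun p : 'I_N * {ffun 'I_m -> 'I_N} => (a <= p.1)%N && adm p.1.+2 p.2));
  last first.
  by move=> [i g]; rewrite adm_ffcons.
rewrite (eq_bigr (fun p : 'I_N * {ffun 'I_m -> 'I_N} =>
  c p.1 * \prod_(j < m) c (p.2 j))); last first.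
  by move=> [i g] _; rewrite big_ord_recl ffcons0; under eq_bigr do rewrite ffconsS.
rewrite -(pair_big_dep (fun i : 'I_N => (a <= i)%N) (fun i g => adm i.+2 g)
  (fun i g => c i * \prod_(j < m) c (g j))) /=.
by rewrite big_geq_mkord; apply: eq_bigr => i _; rewrite -IH /innerFin mulr_sumr.
Qed.

Lemma FrakFinE a N B : (0 < B)%N -> (N < a + B)%N ->
  FrakFin x a N = \sum_(m < B) (-1) ^+ m * gap_sum c a N m.
Proof.
case: B => // B _ NaB; rewrite /FrakFin big_ord_recl expr0 mul1r; congr (_ + _).
have -> : limn (fun n => \sum_(1 <= m < n) (-1) ^+ m * innerFin x a N m) =
    \sum_(1 <= m < B.+1) (-1) ^+ m * gap_sum c a N m.
  apply: lim_near_cst => //; exists B.+1 => // n /= Bn.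
  rewrite (big_cat_nat _ Bn) //= [X in _ + X]big_nat_cond [X in _ + X]big1 ?addr0.
    by apply: eq_bigr => m _; rewrite innerFin_gap_sum.
  move=> [|m] /andP [/andP [Bm _] _] //.
  by rewrite innerFin_gap_sum gap_sum_eq0 ?mulr0 //; lia.
by rewrite big_add1 big_mkord.
Qed.

Lemma FrakFin_empty a N : (N <= a)%N -> FrakFin x a N = 1.
Proof. by move=> Na; rewrite (@FrakFinE a N 1) ?big_ord1 ?mul1r ?addn1. Qed.

Lemma FrakFin_rec a N : (a < N)%N ->
  FrakFin x a N = FrakFin x a.+1 N - x a * x a.+1 * FrakFin x a.+2 N.
Proof.
move=> aN; rewrite (@FrakFinE a N N.+2) ?(@FrakFinE a.+1 N N.+2) ?(@FrakFinE a.+2 N N.+1);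
  try lia.
rewrite [LHS]big_ord_recl [X in X - _]big_ord_recl (eq_bigr (fun i : 'I_N.+1 =>
  (-1) ^+ i.+1 * gap_sum c a.+1 N i.+1 - c a * ((-1) ^+ i * gap_sum c a.+2 N i))).
  by rewrite big_split /= sumrN -mulr_sumr addrA.
by move=> i _; rewrite lift0 gap_sum_rec // exprS; ring.
Qed.

Lemma FrakFin_identity a p r l :
  (1 < p)%N -> (a < p)%N -> (p <= r.+1)%N -> (r.+1 <= l)%N ->
  FrakFin x a r * FrakFin x p l - FrakFin x a l * FrakFin x p r =
  (\prod_(p.-1 <= j < r.+1) (x j * x j.+1)) * FrakFin x a (p - 2) * FrakFin x r.+2 l.
Proof. exact: continuant_identity FrakFin_empty FrakFin_rec a p r l. Qed.

End FiniteFrak.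

Section Tannery.
Variable R : realType.

Lemma tannery (u : nat -> nat -> R) (v M : R^nat) :
  (forall N k, `|u N k| <= M k) -> cvgn (series M) ->
  (forall k, u ^~ k @ \oo --> v k) ->
  cvgn (series v) /\ (fun N => \sum_(k < N) u N k) @ \oo --> limn (series v).
Proof.
move=> uM cvgM cvgu.
have M_ge0 k : 0 <= M k := le_trans (normr_ge0 _) (uM 0%N k).
have vM k : `|v k| <= M k.
  by apply: (cvgr_to_le (cvg_norm (cvgu k))); apply: nearW.
have cvgv : cvgn (series v).
  by apply: normed_cvg; apply: series_le_cvg vM cvgM.
split => //; apply/cvgrPdist_lt => e e0.
set V := limn (series v); set LM := limn (series M).
have e3 : 0 < e / 3 by rewrite divr_gt0.
have [K _ /(_ K (leqnn K)) [headv tailM]] : \forall K \near \oo,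
    `|V - series v K| < e / 3 /\ `|LM - series M K| < e / 3.
  by apply: filterI; [move/cvgrPdist_lt: cvgv | move/cvgrPdist_lt: cvgM]; apply.
have cvg_head : (fun N => \sum_(k < K) u N k) @ \oo --> \sum_(k < K) v k.
  by apply: cvg_big => //; exact: add_continuous.
have seriesM_le n : series M n <= LM.
  by apply: nondecreasing_cvgn_le cvgM _; apply: nondecreasing_series => k _ _.
move/cvgrPdist_lt: cvg_head => /(_ _ e3) head.
apply: filterS2 head (nbhs_infty_ge K) => N headN KN.
have tail : `|\sum_(K <= k < N) u N k| <= LM - series M K.
  apply: le_trans (ler_norm_sum _ _ _) _.
  apply: le_trans (ler_sum _ (fun k _ => uM N k)) _.
  rewrite lerBrDl /series /= -big_cat_nat //=; exact: seriesM_le.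
have tail_lt : LM - series M K < e / 3.
  by move: tailM; rewrite ger0_norm // subr_ge0.
have sK : series v K = \sum_(k < K) v k by rewrite seriesEord.
rewrite -(big_mkord xpredT) (big_cat_nat _ KN) //= big_mkord.
have -> : V - (\sum_(k < K) u N k + \sum_(K <= k < N) u N k) =
    (V - series v K) + (\sum_(k < K) v k - \sum_(k < K) u N k) - \sum_(K <= k < N) u N k.
  by rewrite sK; ring.
have e_split : e / 3 + e / 3 + e / 3 = e by field.
rewrite -e_split; apply: le_lt_trans (ler_normB _ _) _.
apply: ltrD; last exact: le_lt_trans tail tail_lt.
by apply: le_lt_trans (ler_normD _ _) _; apply: ltrD.
Qed.

End Tannery.

Section ComplexLimits.
Variable R : realType.
Local Notation C := (R[i] : numClosedFieldType).
Local Notation normc := (@Normc.normc R).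
Local Notation Re := (@complex.Re R).
Local Notation Im := (@complex.Im R).

Lemma normc_ge0 (z : R[i]) : 0 <= normc z.
Proof. by case: z => a b; rewrite /Normc.normc sqrtr_ge0. Qed.

Lemma Re_le_normc (z : R[i]) : `|Re z| <= normc z.
Proof. by case: z => a b; rewrite /Normc.normc -sqrtr_sqr ler_wsqrtr // lerDl sqr_ge0. Qed.

Lemma Im_le_normc (z : R[i]) : `|Im z| <= normc z.
Proof. by case: z => a b; rewrite /Normc.normc -sqrtr_sqr ler_wsqrtr // lerDr sqr_ge0. Qed.

Lemma Re_sum I (r : seq I) (F : I -> R[i]) : Re (\sum_(i <- r) F i) = \sum_(i <- r) Re (F i).
Proof. exact: (@raddf_sum _ _ (Re : Rcomplex R -> R)). Qed.

Lemma Im_sum I (r : seq I) (F : I -> R[i]) : Im (\sum_(i <- r) F i) = \sum_(i <- r) Im (F i).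
Proof. exact: (@raddf_sum _ _ (Im : Rcomplex R -> R)). Qed.

Lemma cvg_Re_Im (f : nat -> C) (w : C) : f @ \oo --> w ->
  Re \o f @ \oo --> Re w /\ Im \o f @ \oo --> Im w.
Proof.
move/cvgrPdist_lt => fw; split; apply/cvgrPdist_lt => e e0;
  apply: filterS (fw e%:C%C _) => [n|]; rewrite ?ltcR // => /(le_lt_trans _); apply.
  by rewrite /= -raddfB; apply: Re_le_normc.
by rewrite /= -raddfB; apply: Im_le_normc.
Qed.

Lemma cvg_complex (f : nat -> C) (a b : R) :
  Re \o f @ \oo --> a -> Im \o f @ \oo --> b -> f @ \oo --> ((a +i* b)%C : C).
Proof.
move=> /cvgrPdist_lt fa /cvgrPdist_lt fb; apply/cvgrPdist_lt => e.
rewrite ltcE => /andP [/eqP Ime0 Ree0].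
have -> : e = ((Re e)%:C%C : C) by case: e Ime0 {Ree0} => ? ? /= ->.
have e2 : 0 < Re e / 2 by rewrite divr_gt0.
apply: filterS2 (fa _ e2) (fb _ e2) => n /=.
rewrite normc_def ltcR; case: (f n) => u v /=; rewrite !ltr_norml.
move=> /andP [au1 au2] /andP [bv1 bv2].
rewrite -(gtr0_norm Ree0) -sqrtr_sqr ltr_sqrt ?exprn_gt0 //; nra.
Qed.

Lemma tannery_complex (u : nat -> nat -> C) (v : nat -> C) (M : R^nat) :
  (forall N k, normc (u N k) <= M k) -> cvgn (series M) ->
  (forall k, u ^~ k @ \oo --> v k) ->
  cvgn (series v) /\ (fun N => \sum_(k < N) u N k) @ \oo --> limn (series v).
Proof.
move=> uM cvgM cvgu.
have [cvgRe sumRe] := tannery (fun N k => le_trans (Re_le_normc _) (uM N k)) cvgM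
  (fun k => (cvg_Re_Im (cvgu k)).1).
have [cvgIm sumIm] := tannery (fun N k => le_trans (Im_le_normc _) (uM N k)) cvgM
  (fun k => (cvg_Re_Im (cvgu k)).2).
have series_v : series v @ \oo -->
    ((limn (series (Re \o v)) +i* limn (series (Im \o v)))%C : C).
  apply: cvg_complex.
    have -> : Re \o series v = series (Re \o v) by apply/funext => n; rewrite /= Re_sum.
    exact: cvgRe.
  have -> : Im \o series v = series (Im \o v) by apply/funext => n; rewrite /= Im_sum.
  exact: cvgIm.
split; first by apply/cvg_ex; exists (limn (series (Re \o v)) +i* limn (series (Im \o v)))%C.
rewrite (cvg_lim _ series_v) //; apply: cvg_complex.
  have -> : Re \o (fun N => \sum_(k < N) u N k) = (fun N => \sum_(k < N) Re (u N k))
    by apply/funext => N; rewrite /= Re_sum.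
  exact: sumRe.
have -> : Im \o (fun N => \sum_(k < N) u N k) = (fun N => \sum_(k < N) Im (u N k))
  by apply/funext => N; rewrite /= Im_sum.
exact: sumIm.
Qed.

End ComplexLimits.

Section PowerSumBound.
Variable R : realFieldType.

Lemma exprD_ge_bernoulli (b s : R) m : 0 <= b -> 0 <= s ->
  b ^+ m.+1 + m.+1%:R * s * b ^+ m <= (b + s) ^+ m.+1.
Proof.
move=> b0 s0; elim: m => [|m IH]; first by rewrite expr1 expr0 mulr1 mul1r.
rewrite [(b + s) ^+ m.+2]exprS; apply: le_trans (ler_wpM2l (addr_ge0 b0 s0) IH).
rewrite -subr_ge0 (_ : _ - _ = m.+1%:R * s ^+ 2 * b ^+ m); last first.
  by rewrite -natr1 !exprS; ring.
by rewrite !mulr_ge0 ?exprn_ge0 ?ler0n.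
Qed.

Lemma ler_sum_tail (s : nat -> R) a b N : (forall k, 0 <= s k) -> (a <= b)%N ->
  \sum_(b <= k < N) s k <= \sum_(a <= k < N) s k.
Proof.
move=> s0 ab; have [bN|Nb] := leqP b N.
  by rewrite (big_cat_nat ab bN) //= lerDr sumr_ge0.
by rewrite (big_geq (ltnW Nb)) sumr_ge0.
Qed.

(* Discrete form of (m+1) int_a^N s(t) (int_t^N s)^m dt = (int_a^N s)^(m+1); it is the
   source of the 1/m! decay of gap sums. *)
Lemma sum_mul_tail_exp_le (s : nat -> R) a N m : (forall k, 0 <= s k) ->
  m.+1%:R * \sum_(a <= k < N) s k * (\sum_(k.+1 <= j < N) s j) ^+ m
    <= (\sum_(a <= k < N) s k) ^+ m.+1.
Proof.
move=> s0; elim: {a}(N - a)%N {-2}a (erefl (N - a)%N) => [|d IH] a Nad.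
  by rewrite !big_geq ?mulr0 ?expr0n //; lia.
have aN : (a < N)%N by lia.
rewrite !(big_ltn aN) mulrDr.
set T := \sum_(a.+1 <= j < N) s j.
have T0 : 0 <= T by rewrite sumr_ge0.
have := IH a.+1 ltac:(lia); rewrite -/T => tail.
have := exprD_ge_bernoulli m T0 (s0 a); rewrite (addrC T); lra.
Qed.

End PowerSumBound.

Section GapSumBound.
Variable R : realType.
Local Notation normc := (@Normc.normc R).

Lemma normc_gap_sum_le (c : nat -> R[i]) a N m :
  normc (gap_sum c a N m) <= (\sum_(a <= k < N) normc (c k)) ^+ m / m`!%:R.
Proof.
have c0 k : 0 <= normc (c k) by apply: normc_ge0.
elim: m a => [|m IH] a.
  by rewrite expr0 fact0 divr1 (_ : normc 1 = 1) //; exact: Normc.normc1.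
rewrite [gap_sum _ _ _ _]/=.
apply: le_trans (@ler_norm_sum _ (Rcomplex R) _ _ _ _) _.
apply: le_trans (_ : \sum_(a <= k < N)
  normc (c k) * ((\sum_(k.+1 <= j < N) normc (c j)) ^+ m / m`!%:R) <= _).
  apply: ler_sum => k _; rewrite [`|_|]Normc.normcM ler_wpM2l //.
  apply: le_trans (IH k.+2) _; rewrite ler_wpM2r ?invr_ge0 ?ler0n // lerXn2r ?nnegrE;
    by rewrite ?sumr_ge0 ?ler_sum_tail.
rewrite (_ : \sum_(a <= k < N) _ = m.+1%:R * (\sum_(a <= k < N)
    normc (c k) * (\sum_(k.+1 <= j < N) normc (c j)) ^+ m) / (m.+1)`!%:R).
  by rewrite ler_pM2r ?invr_gt0 ?ltr0n ?fact_gt0 // sum_mul_tail_exp_le.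
rewrite mulr_sumr mulr_suml; apply: eq_bigr => k _; rewrite factS natrM.
by field; rewrite nat1r !pnatr_eq0 -lt0n fact_gt0.
Qed.

End GapSumBound.

Section InfiniteFrak.
Variables (R : realType) (x : nat -> R[i]).
Hypothesis x_summable : adjAbsSummable x.
Local Notation C := (R[i] : numClosedFieldType).
Local Notation c := (fun k => x k * x k.+1).
Local Notation s := (fun k => Normc.normc (x k * x k.+1)).

Lemma cvg_series_normc : cvgn (series s).
Proof.
have /cvg_Re_Im [+ _] := x_summable.
have -> : @complex.Re R \o (fun n => \sum_(1 <= k < n) `|c k|) = fun n => \sum_(1 <= k < n) s k.
  apply/funext => n; rewrite /= Re_sum; apply: eq_bigr => k _.
  by rewrite normc_def /=; case: (_ * _).
move=> cvg_tail; apply/cvg_ex; eexists; rewrite -(cvg_shiftS (series s)).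
have -> : [sequence series s n.+1]_n = fun n => s 0%N + \sum_(1 <= k < n.+1) s k.
  by apply/funext => n; rewrite /series /= big_ltn.
apply: cvgD (cvg_cst _) _.
by rewrite (cvg_shiftS (fun n => \sum_(1 <= k < n) s k)); exact: cvg_tail.
Qed.

Let S := limn (series s).

Lemma sum_normc_le a N : \sum_(a <= k < N) s k <= S.
Proof.
have s0 k : 0 <= s k by apply: normc_ge0.
apply: le_trans (ler_sum_tail _ s0 (leq0n a)) _.
by apply: nondecreasing_cvgn_le cvg_series_normc N; apply: nondecreasing_series.
Qed.

Lemma lim_series_normc_ge0 : 0 <= S.
Proof. by apply: le_trans (sum_normc_le 0 0); rewrite big_geq. Qed.

Lemma normc_gap_sum_le_exp a N m : Normc.normc (gap_sum c a N m) <= exp_coeff S m.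
Proof.
apply: le_trans (normc_gap_sum_le _ _ _ _) _; rewrite /exp_coeff /=.
rewrite ler_wpM2r ?invr_ge0 ?ler0n // lerXn2r ?nnegrE ?sum_normc_le
  ?lim_series_normc_ge0 //.
by rewrite sumr_ge0 // => k _; apply: normc_ge0.
Qed.

Lemma gap_sum_mkcond a N m : gap_sum c a N m.+1 =
  \sum_(k < N) (if (a <= k)%N then c k * gap_sum c k.+2 N m else 0).
Proof. by rewrite [LHS]/= big_geq_mkord big_mkcond. Qed.

Lemma cvg_gap_sum m a : cvgn (fun N => gap_sum c a N m : C).
Proof.
elim: m a => [|m IH] a; first exact: is_cvg_cst.
have := @tannery_complex R
  (fun N k => if (a <= k)%N then c k * gap_sum c k.+2 N m else 0)
  (fun k => if (a <= k)%N then c k * limn (fun N => gap_sum c k.+2 N m : C) else 0)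
  (fun k => s k * exp_coeff S m); case.
- move=> N k; case: ifP => _.
    rewrite [Normc.normc _]Normc.normcM; apply: ler_wpM2l; first exact: normc_ge0.
    exact: normc_gap_sum_le_exp.
  rewrite (_ : Normc.normc 0 = 0); last exact: Normc.normc0.
  by rewrite mulr_ge0 ?exp_coeff_ge0 ?lim_series_normc_ge0 //; apply: normc_ge0.
- rewrite (_ : series _ = fun n => series s n * exp_coeff S m).
    by apply: is_cvgM; [exact: cvg_series_normc | exact: is_cvg_cst].
  by apply/funext => n; rewrite /series /= mulr_suml.
- move=> k; case: ifP => _; last exact: cvg_cst.
  by apply: cvgM; [exact: cvg_cst | exact: IH].
move=> _ cvg_u; apply/cvg_ex; eexists.
by under eq_fun do rewrite gap_sum_mkcond; exact: cvg_u.
Qed.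

Lemma FrakFin_cvg a : (0 < a)%N -> FrakFin x a N @[N --> \oo] --> FrakInf x a.
Proof.
move=> a0; set v := fun m => (-1) ^+ m * limn (fun N => gap_sum c a N m : C).
have := @tannery_complex R (fun N m => (-1) ^+ m * gap_sum c a N m) v (exp_coeff S); case.
- move=> N m; rewrite -signr_odd; case: (odd m); rewrite ?expr1 ?expr0 ?mulN1r ?mul1r.
    by rewrite (_ : Normc.normc (- _) = Normc.normc (gap_sum c a N m)) ?normc_gap_sum_le_exp //;
      exact: normcN.
  exact: normc_gap_sum_le_exp.
- exact: is_cvg_series_exp_coeff.
- by move=> m; apply: cvgM; [exact: cvg_cst | exact: cvg_gap_sum].
move=> cvg_v cvg_u.
have -> : FrakInf x a = limn (series v).
  have v0 : v 0%N = 1 by rewrite /v expr0 mul1r lim_cst.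
  have cvg_tail : (fun n => \sum_(1 <= m < n) (-1) ^+ m * innerInf x a m) @ \oo -->
      limn (series v) - 1.
    have cvg_v1 : (fun n => series v n - 1) @ \oo --> limn (series v) - 1.
      exact: cvgB cvg_v (cvg_cst (1 : C)).
    apply: cvg_trans cvg_v1; apply: near_eq_cvg.
    exists 1%N => // n /= n1; rewrite /series /= (big_ltn n1) v0 addrC addKr.
    apply: eq_bigr => m _; rewrite /v /innerInf.
    by under [in RHS]eq_fun do rewrite innerFin_gap_sum.
  by rewrite /FrakInf (cvg_lim _ cvg_tail) // addrC subrK.
apply: cvg_trans cvg_u; apply: near_eq_cvg; exists 1%N => // N /= N1.
by rewrite (@FrakFinE _ _ a N N) //; lia.
Qed.

End InfiniteFrak.

Theorem mainTheorem1 (R : realType) :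
  (forall (p r l : nat) (x : nat -> R[i]),
      (1 < p)%N -> (p <= r.+1)%N -> (r.+1 <= l)%N ->
      FrakFin x 1 r * FrakFin x p l - FrakFin x 1 l * FrakFin x p r =
      (\prod_(p.-1 <= j < r.+1) (x j * x j.+1))
        * FrakFin x 1 (p - 2) * FrakFin x r.+2 l)
  /\
  (forall (p r : nat) (x : nat -> R[i]),
      (1 < p)%N -> (p <= r.+1)%N ->
      adjAbsSummable x ->
      FrakFin x 1 r * FrakInf x p - FrakFin x p r * FrakInf x 1 =
      (\prod_(p.-1 <= j < r.+1) (x j * x j.+1))
        * FrakFin x 1 (p - 2) * FrakInf x r.+2).
Proof.
split=> [p r l x p1 pr rl | p r x p1 pr hx]; first exact: FrakFin_identity.
set P := \prod_(p.-1 <= j < r.+1) (x j * x j.+1).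
have cvg_lhs : (fun l => FrakFin x 1 r * FrakFin x p l - FrakFin x p r * FrakFin x 1 l)
    @ \oo --> FrakFin x 1 r * FrakInf x p - FrakFin x p r * FrakInf x 1.
  by apply: cvgB; apply: cvgM (cvg_cst _) (FrakFin_cvg hx _); lia.
have cvg_rhs : (fun l => FrakFin x 1 r * FrakFin x p l - FrakFin x p r * FrakFin x 1 l)
    @ \oo --> (P * FrakFin x 1 (p - 2) * FrakInf x r.+2 : R[i] : numClosedFieldType).
  apply: cvg_trans (cvgM (cvg_cst _) (FrakFin_cvg hx (ltn0Sn r.+1))).
  apply: near_eq_cvg; exists r.+1 => // l /= rl.
  by rewrite (mulrC (FrakFin x p r)) FrakFin_identity.
by rewrite -(cvg_lim _ cvg_lhs) // (cvg_lim _ cvg_rhs).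
Qed.
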